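(* Assume the general-case standing hypotheses, let $\sigma\in(0,1)$, $C_1>0$, $\gamma\in[0,2)$, $C_8>0$. Then there exist $\rho>0$ and $\bar\mu\in(0,\hat\mu]$ such that for all $\mu\in(0,\bar\mu]$ and all $(x,\lambda)\in\mathcal B((x^*,\lambda^* ),\delta)$ with $l<x<u$, $\lambda^l,\lambda^u>0$, $\|(x,\lambda)-(x^\mu,\lambda^\mu)\|<\rho$, $\|F_\mu(x,\lambda)\|\le C_1\mu$ and $\|(\Delta x^N_{\mathcal A_x},\Delta\lambda^{l,N}_{\mathcal I_l},\Delta\lambda^{u,N}_{\mathcal I_u})\|\ge C_8\mu^\gamma$ (Newton direction for $\mu^+=\sigma\mu$), the following holds. Define $(\Delta x,\Delta\lambda^l,\Delta\lambda^u)$ by: $\Delta x_i\in\{\Delta x_i^S,\Delta x_i^C\}$ for $i\in\mathcal A_x$ and $\Delta x_i=0$ for $i\in\mathcal I_x$; $\Delta\lambda^l_i=\Delta\lambda^{l,C}_i$ for $i\in\mathcal I_l$ and $0$ for $i\in\mathcal A_l$; $\Delta\lambda^u_i=\Delta\lambda^{u,C}_i$ for $i\in\mathcal I_u$ and $0$ for $i\in\mathcal A_u$. Then with $(x_+^N,\lambda_+^N)=(x,\lambda)+(\Delta x^N,\Delta\lambda^N)$ and $(x_+,\lambda_+)=(x,\lambda)+(\Delta x,\Delta\lambda)$, $$\|(x_+^N,\lambda_+^N)-(x_+,\lambda_+)\|\le\|(x_+^N,\lambda_+^N)-(x,\lambda)\|.$$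
   Context: General problem: minimize $f(x)$ subject to $l\le x\le u$, $l,u\in\mathbb R^n$, $l<u$, $f$ twice continuously differentiable with locally Lipschitz Hessian; multipliers $\lambda=(\lambda^l,\lambda^u)$. $F_\mu(x,\lambda)=\begin{bmatrix}\nabla f(x)-\lambda^l+\lambda^u\\ \Lambda^l(X-L)e-\mu e\\ \Lambda^u(U-X)e-\mu e\end{bmatrix}$ with $X,L,U,\Lambda^l,\Lambda^u$ the diagonal matrices of $x,l,u,\lambda^l,\lambda^u$; $F'(x,\lambda)=\begin{bmatrix}\nabla^2f(x)&-I&I\\ \Lambda^l&X-L&0\\ -\Lambda^u&0&U-X\end{bmatrix}$; Newton direction solves $F'(x,\lambda)(\Delta x^N,\Delta\lambda^{l,N},\Delta\lambda^{u,N})=-F_{\mu^+}(x,\lambda)$. Euclidean norms. Approximations: $\Delta x_i^S=-\frac1{d_i}\big([\nabla f(x)]_i-\mu^+[\frac1{x_i-l_i}-\frac1{u_i-x_i}]\big)$ with $d_i=[\nabla^2f(x)]_{ii}+\frac{\lambda^l_i}{x_i-l_i}+\frac{\lambda^u_i}{u_i-x_i}$; $\Delta x^C_i=-(x_i-l_i)+\mu^+/\lambda^l_i$ for $i\in\mathcal A_l$, $\Delta x_i^C=(u_i-x_i)-\mu^+/\lambda^u_i$ for $i\in\mathcal A_u$; $\Delta\lambda^{l,C}_i=-\lambda^l_i+\mu^+/(x_i-l_i)$, $\Delta\lambda^{u,C}_i=-\lambda^u_i+\mu^+/(u_i-x_i)$. Sets: $\mathcal A_l=\{i:x^*_i=l_i\}$,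 $\mathcal A_u=\{i:x^*_i=u_i\}$, $\mathcal I_l,\mathcal I_u$ complements, $\mathcal A_x=\mathcal A_l\cup\mathcal A_u$, $\mathcal I_x$ its complement. Standing hypotheses: $\nabla f(x^* )-\lambda^{l*}+\lambda^{u*}=0$, $l\le x^*\le u$, $\lambda^{l*},\lambda^{u*}\ge0$, $(x^*-l)_i\lambda^{l*}_i=0$, $(u-x^* )_i\lambda^{u*}_i=0$, $(x^*-l)+\lambda^{l*}>0$, $(u-x^* )+\lambda^{u*}>0$, $[\nabla^2f(x^* )]_{\mathcal I_x\mathcal I_x}\succ0$; $\delta>0$ with $F'$ nonsingular and boundedly invertible on $\mathcal B((x^*,\lambda^* ),\delta)$; $\hat\mu>0$ with a Lipschitz barrier trajectory $(x^\mu,\lambda^\mu)\in\mathcal B((x^*,\lambda^* ),\delta)$, $F_\mu(x^\mu,\lambda^\mu)=0$, $\|(x^\mu,\lambda^\mu)-(x^*,\lambda^* )\|\le C_4\mu$ for $\mu\in(0,\hat\mu]$. *)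

From HB Require Import structures.
From mathcomp Require Import all_boot all_order all_algebra.
From mathcomp Require Import all_classical all_reals all_analysis.
Set Implicit Arguments. Unset Strict Implicit. Unset Printing Implicit Defensive.
Import Order.TTheory GRing.Theory Num.Theory.
Import numFieldNormedType.Exports.
Local Open Scope ring_scope.

(* Points of R^n are row vectors 'rV[R]_n; component i of v is v 0 i. *)

Definition ev {R : realType} {n : nat} (i : 'I_n) : 'rV[R]_n := delta_mx 0 i.

Definition partial {R : realType} {n : nat} (g : 'rV[R]_n -> R) (i : 'I_n)
  (x : 'rV[R]_n) : R := derive g x (ev i).

Definition grad {R : realType} {n : nat} (f : 'rV[R]_n -> R) (x : 'rV[R]_n)
  : 'rV[R]_n := \row_i partial f i x.

Definition hess {R : realType} {n : nat} (f : 'rV[R]_n -> R) (x : 'rV[R]_n)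
  : 'M[R]_n := \matrix_(i, j) partial (partial f i) j x.

Definition C2 {R : realType} {n : nat} (f : 'rV[R]_n -> R) : Prop :=
  continuous f /\
  (forall i x, derivable f x (ev i)) /\
  (forall i, continuous (partial f i)) /\
  (forall i j x, derivable (partial f i) x (ev j)) /\
  (forall i j, continuous (partial (partial f i) j)).

Definition enormr {R : realType} {m : nat} (v : 'rV[R]_m) : R :=
  Num.sqrt (\sum_i v 0 i ^+ 2).
Definition enormc {R : realType} {m : nat} (z : 'cV[R]_m) : R :=
  Num.sqrt (\sum_i z i 0 ^+ 2).

(* Locally Lipschitz Hessian (any matrix norm; the constant is existential) *)
Definition loc_lipschitz_hess {R : realType} {n : nat} (f : 'rV[R]_n -> R) : Prop :=
  forall x : 'rV[R]_n, exists r : R, exists L : R, 0 < r /\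
    forall y z : 'rV[R]_n, enormr (y - x) < r -> enormr (z - x) < r ->
      `|hess f y - hess f z| <= L * enormr (y - z).

Definition stack3 {R : realType} {n : nat} (a b c : 'rV[R]_n) : 'cV[R]_(n + n + n) :=
  col_mx (col_mx a^T b^T) c^T.
Definition enorm3 {R : realType} {n : nat} (a b c : 'rV[R]_n) : R :=
  enormc (stack3 a b c).

Definition Fmu1 {R : realType} {n : nat} (f : 'rV[R]_n -> R)
  (x ll lu : 'rV[R]_n) : 'rV[R]_n := grad f x - ll + lu.
Definition Fmu2 {R : realType} {n : nat} (l : 'rV[R]_n) (mu : R)
  (x ll : 'rV[R]_n) : 'rV[R]_n := \row_i (ll 0 i * (x 0 i - l 0 i) - mu).
Definition Fmu3 {R : realType} {n : nat} (u : 'rV[R]_n) (mu : R)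
  (x lu : 'rV[R]_n) : 'rV[R]_n := \row_i (lu 0 i * (u 0 i - x 0 i) - mu).
Definition Fmu {R : realType} {n : nat} (f : 'rV[R]_n -> R) (l u : 'rV[R]_n)
  (mu : R) (x ll lu : 'rV[R]_n) : 'cV[R]_(n + n + n) :=
  stack3 (Fmu1 f x ll lu) (Fmu2 l mu x ll) (Fmu3 u mu x lu).

(* The Jacobian F'(x, lambda) as a 3n x 3n block matrix
   [[H, -I, I]; [Lambda^l, X - L, 0]; [-Lambda^u, 0, U - X]] *)
Definition Fprime {R : realType} {n : nat} (f : 'rV[R]_n -> R) (l u : 'rV[R]_n)
  (x ll lu : 'rV[R]_n) : 'M[R]_(n + n + n) :=
  block_mx
    (block_mx (hess f x) (- 1%:M) (diag_mx ll) (diag_mx (x - l)))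
    (col_mx 1%:M 0)
    (row_mx (- diag_mx lu) 0)
    (diag_mx (u - x)).

(* Approximate directions, with mup = mu^+ *)
Definition dS {R : realType} {n : nat} (f : 'rV[R]_n -> R) (l u : 'rV[R]_n)
  (mup : R) (x ll lu : 'rV[R]_n) (i : 'I_n) : R :=
  let d := hess f x i i + ll 0 i / (x 0 i - l 0 i) + lu 0 i / (u 0 i - x 0 i) in
  - (1 / d) * (grad f x 0 i - mup * (1 / (x 0 i - l 0 i) - 1 / (u 0 i - x 0 i))).

(* Delta x^C_i: the A_l formula if x*_i = l_i, the A_u formula if x*_i = u_i
   (only used for i in A_x; A_l and A_u are disjoint since l < u). *)
Definition dC {R : realType} {n : nat} (l u xs : 'rV[R]_n)
  (mup : R) (x ll lu : 'rV[R]_n) (i : 'I_n) : R :=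
  if xs 0 i == l 0 i then - (x 0 i - l 0 i) + mup / ll 0 i
  else (u 0 i - x 0 i) - mup / lu 0 i.

Definition dllC {R : realType} {n : nat} (l : 'rV[R]_n) (mup : R)
  (x ll : 'rV[R]_n) (i : 'I_n) : R := - ll 0 i + mup / (x 0 i - l 0 i).
Definition dluC {R : realType} {n : nat} (u : 'rV[R]_n) (mup : R)
  (x lu : 'rV[R]_n) (i : 'I_n) : R := - lu 0 i + mup / (u 0 i - x 0 i).

(* || (dx_{A_x}, dll_{I_l}, dlu_{I_u}) || (Euclidean) *)
Definition norm_active {R : realType} {n : nat} (l u xs : 'rV[R]_n)
  (dx dll dlu : 'rV[R]_n) : R :=
  Num.sqrt (\sum_(i | (xs 0 i == l 0 i) || (xs 0 i == u 0 i)) dx 0 i ^+ 2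
          + \sum_(i | xs 0 i != l 0 i) dll 0 i ^+ 2
          + \sum_(i | xs 0 i != u 0 i) dlu 0 i ^+ 2).

From HB Require Import structures.
From mathcomp Require Import all_boot all_order all_algebra.
From mathcomp Require Import all_classical all_reals all_analysis.
From mathcomp Require Import ring lra.
Import Order.TTheory GRing.Theory Num.Theory.
Import numFieldNormedType.Exports.
Set Implicit Arguments. Unset Strict Implicit. Unset Printing Implicit Defensive.
Local Open Scope ring_scope.

(* At an interior point close to the barrier trajectory, every component of
   the approximate step (Delta x^S or Delta x^C on the active set, the closed
   forms Delta lambda^C on the inactive multipliers) differs from the matching
   component of the Newton step by O(mu^2): each comes from one row of the
   Newton system in which one term, of size O(mu) times a Newton component of
   size O(mu), has been dropped and the row has been divided by a quantity
   bounded away from zero.  The approximate step vanishes on the remaining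
   components, so its squared distance to the Newton step is at most the
   squared Newton step minus its measured part plus 3 n O(mu^4); since the
   measured part is at least C8 mu^gamma with gamma < 2, this is at most the
   squared Newton step for small mu. *)

Section StackedNorm.
Variables (R : realType) (n : nat).
Implicit Types (a b c : 'rV[R]_n).

Lemma enorm3E a b c :
  enorm3 a b c = Num.sqrt (\sum_(i < n) (a 0 i ^+ 2 + b 0 i ^+ 2 + c 0 i ^+ 2)).
Proof.
rewrite /enorm3 /enormc big_split_ord big_split_ord /= -!big_split /=.
by congr Num.sqrt; apply: eq_bigr => i _; rewrite /stack3 ?col_mxEu ?col_mxEd !mxE.
Qed.

Lemma enorm3_coord a b c (i : 'I_n) :
  `|a 0 i| <= enorm3 a b c /\ `|b 0 i| <= enorm3 a b c /\ `|c 0 i| <= enorm3 a b c.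
Proof.
have le_sqrt t S : t ^+ 2 <= S -> `|t| <= Num.sqrt S.
  by move=> h; rewrite -sqrtr_sqr ler_sqrt // (le_trans (sqr_ge0 t)).
rewrite enorm3E (bigD1 i) //=.
have rest : 0 <= \sum_(j | j != i) (a 0 j ^+ 2 + b 0 j ^+ 2 + c 0 j ^+ 2).
  by apply: sumr_ge0 => j _; rewrite !addr_ge0 ?sqr_ge0.
have := sqr_ge0 (a 0 i); have := sqr_ge0 (b 0 i); have := sqr_ge0 (c 0 i).
by move=> *; split; [|split]; apply: le_sqrt; lra.
Qed.

Lemma enorm3_le_uniform a b c (B : R) :
  (forall i, `|a 0 i| <= B /\ `|b 0 i| <= B /\ `|c 0 i| <= B) ->
  enorm3 a b c <= 3 * n%:R * B.
Proof.
move=> hB; have sum_le : \sum_(i < n) (a 0 i ^+ 2 + b 0 i ^+ 2 + c 0 i ^+ 2)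
    <= n%:R * (3 * B ^+ 2).
  apply: (@le_trans _ _ (\sum_(i < n) 3 * B ^+ 2)); last first.
    by rewrite sumr_const card_ord [X in _ <= X]mulr_natl.
  apply: ler_sum => i _.
  have sq t : `|t| <= B -> t ^+ 2 <= B ^+ 2.
    by move=> h; rewrite -real_normK ?num_real // lerXn2r ?nnegrE ?(le_trans _ h).
  have [/sq h1 [/sq h2 /sq h3]] := hB i; lra.
rewrite enorm3E; case: (posnP n) => [n0 | /(Ordinal (n:=n)) i0].
  have n0R : n%:R = 0 :> R by rewrite n0.
  move: sum_le; rewrite n0R !(mul0r, mulr0) => /ler_wsqrtr h.
  by apply: le_trans h _; rewrite sqrtr0.
have B0 : 0 <= B by case: (hB i0) => h _; apply: le_trans h.
rewrite -(ger0_norm (_ : 0 <= 3 * n%:R * B)) ?mulr_ge0 // -sqrtr_sqr.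
apply: ler_wsqrtr; apply: le_trans sum_le _.
have : 1 <= n%:R :> R by rewrite ler1n (leq_ltn_trans _ (ltn_ord i0)).
nra.
Qed.

Lemma enormcN (m : nat) (z : 'cV[R]_m) : enormc (- z) = enormc z.
Proof. by rewrite /enormc; congr Num.sqrt; apply: eq_bigr => k _; rewrite mxE sqrrN. Qed.

Lemma enorm3_coord_chain a b c a' b' c' a'' b'' c'' (t : R) :
  enorm3 (a - a') (b - b') (c - c') < t -> enorm3 (a' - a'') (b' - b'') (c' - c'') <= t ->
  forall i, `|a 0 i - a'' 0 i| < 2 * t /\ `|b 0 i - b'' 0 i| < 2 * t /\
            `|c 0 i - c'' 0 i| < 2 * t.
Proof.
move=> h1 h2 i.
have [p1 [p2 p3]] := enorm3_coord (a - a') (b - b') (c - c') i.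
have [q1 [q2 q3]] := enorm3_coord (a' - a'') (b' - b'') (c' - c'') i.
rewrite !mxE in p1 p2 p3 q1 q2 q3.
have := ler_distD (a' 0 i) (a 0 i) (a'' 0 i).
have := ler_distD (b' 0 i) (b 0 i) (b'' 0 i).
have := ler_distD (c' 0 i) (c 0 i) (c'' 0 i).
move=> *; split; [|split]; lra.
Qed.

End StackedNorm.

Section NewtonSystem.
Variables (R : realType) (n : nat) (f : 'rV[R]_n -> R) (l u x ll lu : 'rV[R]_n).

Lemma Fmu_coords (mu : R) (i : 'I_n) :
  [/\ Fmu1 f x ll lu 0 i = grad f x 0 i - ll 0 i + lu 0 i,
      Fmu2 l mu x ll 0 i = ll 0 i * (x 0 i - l 0 i) - mu &
      Fmu3 u mu x lu 0 i = lu 0 i * (u 0 i - x 0 i) - mu].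
Proof. by rewrite !mxE. Qed.

Lemma newton_rows (s : R) (a b c : 'rV[R]_n) :
  Fprime f l u x ll lu *m stack3 a b c = - Fmu f l u s x ll lu -> forall i,
  [/\ \sum_j hess f x i j * a 0 j - b 0 i + c 0 i = - (grad f x 0 i - ll 0 i + lu 0 i),
      ll 0 i * a 0 i + (x 0 i - l 0 i) * b 0 i = - (ll 0 i * (x 0 i - l 0 i) - s) &
      - (lu 0 i * a 0 i) + (u 0 i - x 0 i) * c 0 i = - (lu 0 i * (u 0 i - x 0 i) - s)].
Proof.
rewrite /Fprime /Fmu /stack3 !opp_col_mx mul_block_col mul_block_col.
rewrite mul_row_col mul_col_mx add_col_mx => /eq_col_mx[/eq_col_mx[h1 h2] h3] i.
rewrite !mulNmx !mul_diag_mx !mul0mx !addr0 !mul1mx in h1 h2 h3.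
have at_i (M N : 'cV[R]_n) : M = N -> M i 0 = N i 0 by move->.
have sumT : \sum_j hess f x i j * a^T j 0 = \sum_j hess f x i j * a 0 j.
  by apply: eq_bigr => j _; rewrite !mxE.
by move: (at_i _ _ h1) (at_i _ _ h2) (at_i _ _ h3); rewrite !mxE sumT => -> -> ->.
Qed.

Lemma compl_products_le (mu C : R) :
  enormc (Fmu f l u mu x ll lu) <= C * mu -> forall i,
  ll 0 i * (x 0 i - l 0 i) <= (1 + C) * mu /\ lu 0 i * (u 0 i - x 0 i) <= (1 + C) * mu.
Proof.
move=> hF i; have [_ [h2 h3]] := enorm3_coord (Fmu1 f x ll lu) (Fmu2 l mu x ll)
  (Fmu3 u mu x lu) i.
have [_ F2 F3] := Fmu_coords mu i.
move: (le_trans h2 hF) (le_trans h3 hF); rewrite F2 F3.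
by rewrite !ler_norml => /andP[_ ?] /andP[_ ?]; split; lra.
Qed.

Lemma residual_shift_le (mu s C : R) :
  enormc (Fmu f l u mu x ll lu) <= C * mu -> 0 <= s <= mu ->
  enormc (Fmu f l u s x ll lu) <= 3 * n%:R * ((C + 1) * mu).
Proof.
move=> hF /andP[s0 smu]; apply: enorm3_le_uniform => i.
have [h1 [h2 h3]] := enorm3_coord (Fmu1 f x ll lu) (Fmu2 l mu x ll) (Fmu3 u mu x lu) i.
have [F1 F2 F3] := Fmu_coords mu i; have [_ G2 G3] := Fmu_coords s i.
move: (le_trans h1 hF) (le_trans h2 hF) (le_trans h3 hF).
rewrite F1 F2 F3 G2 G3 !ler_norml.
by move=> /andP[? ?] /andP[? ?] /andP[? ?]; split; [|split]; lra.
Qed.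

End NewtonSystem.

Lemma newton_step_le (R : realType) (n : nat) (M : 'M[R]_(n + n + n))
    (z : 'cV[R]_(n + n + n)) (a b c : 'rV[R]_n) (K : R) :
  M \in unitmx -> (forall z, enormc (invmx M *m z) <= K * enormc z) ->
  M *m stack3 a b c = - z -> enorm3 a b c <= `|K| * enormc z.
Proof.
move=> Munit hK hM; rewrite /enorm3 -(mulKmx Munit (stack3 a b c)) hM.
apply: le_trans (hK _) _; rewrite enormcN ler_wpM2r ?ler_norm //.
by rewrite /enormc sqrtr_ge0.
Qed.

Lemma newton_step_small (R : realType) (n : nat) (f : 'rV[R]_n -> R)
    (l u x ll lu dxN dllN dluN : 'rV[R]_n) (mu s C K : R) :
  Fprime f l u x ll lu \in unitmx ->
  (forall z, enormc (invmx (Fprime f l u x ll lu) *m z) <= K * enormc z) ->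
  Fprime f l u x ll lu *m stack3 dxN dllN dluN = - Fmu f l u s x ll lu ->
  enormc (Fmu f l u mu x ll lu) <= C * mu -> 0 <= s <= mu ->
  let M := `|K| * (3 * n%:R * (C + 1)) in
  forall i, `|dxN 0 i| <= M * mu /\ `|dllN 0 i| <= M * mu /\ `|dluN 0 i| <= M * mu.
Proof.
move=> Funit hK hN hF hs M i.
have step := le_trans (newton_step_le Funit hK hN)
  (ler_wpM2l (normr_ge0 K) (residual_shift_le hF hs)).
have [h1 [h2 h3]] := enorm3_coord dxN dllN dluN i.
by rewrite /M !mulrA in step *; split; [|split]; apply: le_trans step.
Qed.

Section ScalarErrors.
Variable R : realFieldType.

Lemma compl_row_step (w g a b s : R) : g != 0 ->
  w * a + g * b = - (w * g - s) -> g * (b - (- w + s / g)) = - (w * a).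
Proof.
move=> g0 E; have -> : g * (b - (- w + s / g)) = g * b + w * g - s by field.
lra.
Qed.

Lemma quotient_error_le (g w a e c Q A : R) :
  0 < c <= g -> 0 <= w -> w * g <= Q -> `|a| <= A -> `|g * e| <= w * `|a| ->
  `|e| <= Q * A / c ^+ 2.
Proof.
move=> /andP[c0 cg] w0 wgQ aA hge; have g0 := lt_le_trans c0 cg.
rewrite ler_pdivlMr ?exprn_gt0 //.
have : `|e| * c ^+ 2 <= `|e| * g ^+ 2 by rewrite ler_wpM2l // lerXn2r // nnegrE ltW.
move/le_trans; apply.
rewrite normrM (gtr0_norm g0) in hge.
have : `|e| * g ^+ 2 <= w * `|a| * g by rewrite expr2 mulrA ler_pM2r // mulrC.
move/le_trans; apply.
by rewrite mulrAC; apply: ler_pM => //; rewrite mulr_ge0 // ltW.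
Qed.

Lemma ratio_lower_bound (w g c Q : R) :
  0 < c <= w -> 0 < g -> w * g <= Q -> c ^+ 2 <= (w / g) * Q.
Proof.
move=> /andP[c0 cw] g0 wgQ; have w0 := lt_le_trans c0 cw.
apply: (@le_trans _ _ ((w / g) * (w * g))); last first.
  by apply: ler_wpM2l => //; rewrite divr_ge0 // ltW.
have -> : w / g * (w * g) = w ^+ 2 by field; rewrite gt_eqF.
by rewrite lerXn2r // nnegrE ltW.
Qed.

Lemma diag_lower_bound (h p q Hb Q c : R) :
  0 <= Q -> c ^+ 2 <= (p + q) * Q -> `|h| <= Hb -> 2 * Hb * Q <= c ^+ 2 ->
  c ^+ 2 <= 2 * (h + p + q) * Q.
Proof.
move=> Q0 pqQ; rewrite ler_norml => /andP[hHb _] HbQ.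
have : - Hb * Q <= h * Q by rewrite ler_wpM2r.
nra.
Qed.

Lemma diag_error_le (d e S W Q c : R) :
  0 < c -> 0 <= Q -> c ^+ 2 <= 2 * d * Q -> d * e = - S -> `|S| <= W ->
  `|e| <= 2 * Q * W / c ^+ 2.
Proof.
move=> c0 Q0 cdQ deS SW; have c20 : 0 < c ^+ 2 by rewrite exprn_gt0.
have d0 : 0 < d.
  rewrite ltNge; apply/negP => d0.
  have : d * Q <= 0 by rewrite mulr_le0_ge0.
  lra.
have edW : `|e| * d <= W by rewrite -(gtr0_norm d0) -normrM mulrC deS normrN.
rewrite ler_pdivlMr //.
have : `|e| * c ^+ 2 <= `|e| * (2 * d * Q) by rewrite ler_wpM2l.
have : `|e| * d * Q <= W * Q by rewrite ler_wpM2r.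
have := normr_ge0 e.
nra.
Qed.

(* Eliminating b and c from the three rows of the Newton system at one
   coordinate leaves  d (a - a^S) = -S,  where S collects the off-diagonal
   Hessian terms and  a^S = -(1/d) (g - s (1/g1 - 1/g3))  is the separable step. *)
Lemma newton_row_elimination (h S gr w1 w3 g1 g3 a b c s : R) :
  0 < g1 -> 0 < g3 ->
  h * a + S - b + c = - (gr - w1 + w3) ->
  w1 * a + g1 * b = - (w1 * g1 - s) ->
  - (w3 * a) + g3 * c = - (w3 * g3 - s) ->
  let d := h + w1 / g1 + w3 / g3 in d != 0 ->
  d * (a - (- (1 / d) * (gr - s * (1 / g1 - 1 / g3)))) = - S.
Proof.
move=> g10 g30 E1 E2 E3 d d0.
have g1n : g1 != 0 by rewrite gt_eqF.
have g3n : g3 != 0 by rewrite gt_eqF.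
have -> : S = - (gr - w1 + w3) - h * a + b - c by lra.
have -> : b = (- (w1 * g1 - s) - w1 * a) / g1 by rewrite -E2; field.
have -> : c = (- (w3 * g3 - s) + w3 * a) / g3 by rewrite -E3; field.
have dE : (h * g1 + w1) * g3 + w3 * g1 = d * (g1 * g3) by rewrite /d; field; apply/andP.
by rewrite /d; field; rewrite g1n g3n -/d dE mulf_neq0 // mulf_neq0.
Qed.

End ScalarErrors.

(* One coordinate of the final comparison: replacing p by an approximation q
   that is Z-accurate where it is used (flag b) and zero elsewhere costs at
   most Z^2 more than discarding p where it is used. *)
Lemma coord_tradeoff (R : realFieldType) (b : bool) (p q Z : R) :
  (b -> `|p - q| <= Z) -> (~~ b -> q = 0) ->
  (p - q) ^+ 2 + (if b then p ^+ 2 else 0) <= p ^+ 2 + Z ^+ 2.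
Proof.
case: b => [/(_ isT) pqZ _ | _ /(_ isT) ->]; last by rewrite subr0 addr0 lerDl sqr_ge0.
have : (p - q) ^+ 2 <= Z ^+ 2.
  by rewrite -real_normK ?num_real // lerXn2r ?nnegrE ?(le_trans _ pqZ).
lra.
Qed.

Lemma approx_step_dist_le (R : realType) (n : nat) (l u xs a b c a' b' c' : 'rV[R]_n)
    (Z B : R) :
  (forall i, xs 0 i = l 0 i \/ xs 0 i = u 0 i -> `|a 0 i - a' 0 i| <= Z) ->
  (forall i, xs 0 i <> l 0 i -> xs 0 i <> u 0 i -> a' 0 i = 0) ->
  (forall i, xs 0 i <> l 0 i -> `|b 0 i - b' 0 i| <= Z) ->
  (forall i, xs 0 i = l 0 i -> b' 0 i = 0) ->
  (forall i, xs 0 i <> u 0 i -> `|c 0 i - c' 0 i| <= Z) ->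
  (forall i, xs 0 i = u 0 i -> c' 0 i = 0) ->
  0 <= B -> B <= norm_active l u xs a b c -> 3 * n%:R * Z ^+ 2 <= B ^+ 2 ->
  enorm3 (a - a') (b - b') (c - c') <= enorm3 a b c.
Proof.
move=> ha ha0 hb hb0 hc hc0 B0 hB hZ.
have a_act i : (xs 0 i == l 0 i) || (xs 0 i == u 0 i) -> `|a 0 i - a' 0 i| <= Z.
  by case/orP => /eqP h; apply: ha; [left | right].
have a_inact i : ~~ ((xs 0 i == l 0 i) || (xs 0 i == u 0 i)) -> a' 0 i = 0.
  by rewrite negb_or => /andP[/eqP h1 /eqP h2]; apply: ha0.
have b_act i : xs 0 i != l 0 i -> `|b 0 i - b' 0 i| <= Z by move/eqP; apply: hb.
have b_inact i : ~~ (xs 0 i != l 0 i) -> b' 0 i = 0 by rewrite negbK => /eqP; apply: hb0.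
have c_act i : xs 0 i != u 0 i -> `|c 0 i - c' 0 i| <= Z by move/eqP; apply: hc.
have c_inact i : ~~ (xs 0 i != u 0 i) -> c' 0 i = 0 by rewrite negbK => /eqP; apply: hc0.
rewrite !enorm3E; apply: ler_wsqrtr.
pose act i := (if (xs 0 i == l 0 i) || (xs 0 i == u 0 i) then a 0 i ^+ 2 else 0)
  + (if xs 0 i != l 0 i then b 0 i ^+ 2 else 0)
  + (if xs 0 i != u 0 i then c 0 i ^+ 2 else 0).
have act_ge0 : 0 <= \sum_i act i.
  by apply: sumr_ge0 => i _; rewrite !addr_ge0 //; case: ifP; rewrite ?sqr_ge0.
have B_act : B ^+ 2 <= \sum_i act i.
  rewrite -(sqr_sqrtr act_ge0) lerXn2r ?nnegrE ?sqrtr_ge0 //.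
  by move: hB; rewrite /norm_active /act !big_split /= -!big_mkcond.
have per_coord : \sum_i ((a - a') 0 i ^+ 2 + (b - b') 0 i ^+ 2 + (c - c') 0 i ^+ 2
    + act i) <= \sum_(i < n) (a 0 i ^+ 2 + b 0 i ^+ 2 + c 0 i ^+ 2 + 3 * Z ^+ 2).
  apply: ler_sum => i _; rewrite !mxE /act.
  have := coord_tradeoff (a_act i) (a_inact i).
  have := coord_tradeoff (b_act i) (b_inact i).
  have := coord_tradeoff (c_act i) (c_inact i).
  set ta := if _ || _ then _ else _; set tb := if xs 0 i != l 0 i then _ else _.
  set tc := if xs 0 i != u 0 i then _ else _.
  move=> *; lra.
rewrite big_split [X in _ <= X]big_split /= sumr_const card_ord in per_coord.
rewrite -[(3 * Z ^+ 2) *+ n]mulr_natl in per_coord.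
lra.
Qed.

Lemma offdiag_sum_le (R : realDomainType) (n : nat) (F : 'I_n -> R) (i : 'I_n) (B : R) :
  (forall j, `|F j| <= B) -> `|\sum_(j | j != i) F j| <= n%:R * B.
Proof.
move=> FB; have B0 := le_trans (normr_ge0 _) (FB i).
apply: le_trans (ler_norm_sum _ _ _) _.
apply: (@le_trans _ _ (\sum_(j < n) B)); last by rewrite sumr_const card_ord mulr_natl.
by rewrite big_mkcond /=; apply: ler_sum => j _; case: ifP.
Qed.

Section NewtonVersusApproximation.
Variables (R : realType) (n : nat) (f : 'rV[R]_n -> R) (l u xs x ll lu : 'rV[R]_n).
Variables (s c Q A Hb : R) (dxN dllN dluN : 'rV[R]_n).
Hypothesis x_interior : forall i, l 0 i < x 0 i < u 0 i.
Hypothesis ll_gt0 : forall i, 0 < ll 0 i.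
Hypothesis lu_gt0 : forall i, 0 < lu 0 i.
Hypothesis newton :
  Fprime f l u x ll lu *m stack3 dxN dllN dluN = - Fmu f l u s x ll lu.
Hypothesis products_le :
  forall i, ll 0 i * (x 0 i - l 0 i) <= Q /\ lu 0 i * (u 0 i - x 0 i) <= Q.
Hypothesis newton_le :
  forall i, `|dxN 0 i| <= A /\ `|dllN 0 i| <= A /\ `|dluN 0 i| <= A.
Hypothesis hess_le : forall i j, `|hess f x i j| <= Hb.
Hypothesis c_gt0 : 0 < c.
Hypothesis hess_small : 2 * Hb * Q <= c ^+ 2.
Hypothesis sep_l : forall i,
  (xs 0 i = l 0 i -> c <= ll 0 i) /\ (xs 0 i <> l 0 i -> c <= x 0 i - l 0 i).
Hypothesis sep_u : forall i,
  (xs 0 i = u 0 i -> c <= lu 0 i) /\ (xs 0 i <> u 0 i -> c <= u 0 i - x 0 i).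

Let Z := Q * A * (1 + 2 * n%:R * Hb) / c ^+ 2.

Let gaps_gt0 i : 0 < x 0 i - l 0 i /\ 0 < u 0 i - x 0 i.
Proof. by have /andP[? ?] := x_interior i; rewrite !subr_gt0. Qed.

(* Z dominates both kinds of error: the quotient errors of the
   complementarity rows and the diagonal-dominance error of the first row. *)
Lemma error_terms_le_Z (i : 'I_n) :
  Q * A / c ^+ 2 <= Z /\ 2 * Q * (n%:R * (Hb * A)) / c ^+ 2 <= Z.
Proof.
have [g0 _] := gaps_gt0 i; have [hQ _] := products_le i; have [hA _] := newton_le i.
have Q0 : 0 <= Q by apply: le_trans hQ; rewrite mulr_ge0 ?ltW.
have A0 : 0 <= A := le_trans (normr_ge0 _) hA.
have Hb0 : 0 <= Hb := le_trans (normr_ge0 _) (hess_le i i).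
have QA0 : 0 <= Q * A by rewrite mulr_ge0.
have QAnHb : 0 <= Q * A * (n%:R * Hb) by rewrite !mulr_ge0.
by rewrite /Z !ler_pM2r ?invr_gt0 ?exprn_gt0 //; split; nra.
Qed.

Lemma dllC_error (i : 'I_n) : xs 0 i <> l 0 i -> `|dllN 0 i - dllC l s x ll i| <= Z.
Proof.
move=> xs_l; have [_ E2 _] := newton_rows newton i; have [g0 _] := gaps_gt0 i.
apply: le_trans (error_terms_le_Z i).1.
apply: (@quotient_error_le _ (x 0 i - l 0 i) (ll 0 i) (dxN 0 i)).
- by rewrite c_gt0 (sep_l i).2.
- exact: ltW.
- exact: (products_le i).1.
- exact: (newton_le i).1.
- by rewrite (compl_row_step (lt0r_neq0 g0) E2) normrN normrM ger0_norm // ltW.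
Qed.

Lemma dluC_error (i : 'I_n) : xs 0 i <> u 0 i -> `|dluN 0 i - dluC u s x lu i| <= Z.
Proof.
move=> xs_u; have [_ _ E3] := newton_rows newton i; have [_ g0] := gaps_gt0 i.
rewrite -mulrN in E3; apply: le_trans (error_terms_le_Z i).1.
apply: (@quotient_error_le _ (u 0 i - x 0 i) (lu 0 i) (- dxN 0 i)).
- by rewrite c_gt0 (sep_u i).2.
- exact: ltW.
- exact: (products_le i).2.
- by rewrite normrN; exact: (newton_le i).1.
- by rewrite (compl_row_step (lt0r_neq0 g0) E3) normrN normrM ger0_norm // ltW.
Qed.

(* At an active constraint the complementarity step is accurate because the
   multiplier is bounded away from zero while the gap is small. *)
Lemma dC_error (i : 'I_n) : xs 0 i = l 0 i \/ xs 0 i = u 0 i ->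
  `|dxN 0 i - dC l u xs s x ll lu i| <= Z.
Proof.
move=> active; have [_ E2 E3] := newton_rows newton i; have [gl0 gu0] := gaps_gt0 i.
apply: le_trans (error_terms_le_Z i).1.
case: active => [xs_l | xs_u].
  have E2' : (x 0 i - l 0 i) * dllN 0 i + ll 0 i * dxN 0 i
      = - ((x 0 i - l 0 i) * ll 0 i - s) by lra.
  rewrite /dC xs_l eqxx.
  apply: (@quotient_error_le _ (ll 0 i) (x 0 i - l 0 i) (dllN 0 i)).
  - by rewrite c_gt0 (sep_l i).1.
  - exact: ltW.
  - by rewrite mulrC; exact: (products_le i).1.
  - exact: (newton_le i).2.1.
  - by rewrite (compl_row_step (lt0r_neq0 (ll_gt0 i)) E2') normrN normrM ger0_norm // ltW.
have xs_l : xs 0 i != l 0 i.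
  by have /andP[lx xu] := x_interior i; rewrite xs_u gt_eqF // (lt_trans lx xu).
have E3' : (u 0 i - x 0 i) * dluN 0 i + lu 0 i * - dxN 0 i
    = - ((u 0 i - x 0 i) * lu 0 i - s) by lra.
have -> : dxN 0 i - dC l u xs s x ll lu i
    = - (- dxN 0 i - (- (u 0 i - x 0 i) + s / lu 0 i)).
  by rewrite /dC (negbTE xs_l); ring.
apply: (@quotient_error_le _ (lu 0 i) (u 0 i - x 0 i) (dluN 0 i)).
- by rewrite c_gt0 (sep_u i).1.
- exact: ltW.
- by rewrite mulrC; exact: (products_le i).2.
- exact: (newton_le i).2.2.
- rewrite mulrN normrN (compl_row_step (lt0r_neq0 (lu_gt0 i)) E3').
  by rewrite normrN normrM ger0_norm // ltW.
Qed.

(* At an active constraint the separable step is accurate because the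
   barrier term dominates the diagonal of the reduced Newton matrix, so the
   neglected off-diagonal Hessian terms are damped by a factor O(Q). *)
Lemma dS_error (i : 'I_n) : xs 0 i = l 0 i \/ xs 0 i = u 0 i ->
  `|dxN 0 i - dS f l u s x ll lu i| <= Z.
Proof.
move=> active; have [E1 E2 E3] := newton_rows newton i; have [gl0 gu0] := gaps_gt0 i.
have [hQl hQu] := products_le i.
set p := ll 0 i / (x 0 i - l 0 i); set q := lu 0 i / (u 0 i - x 0 i).
have p0 : 0 <= p by rewrite divr_ge0 // ltW.
have q0 : 0 <= q by rewrite divr_ge0 // ltW.
have Q0 : 0 <= Q by apply: le_trans hQl; rewrite mulr_ge0 // ltW.
have pqQ : c ^+ 2 <= (p + q) * Q.
  rewrite mulrDl; case: active => [xs_l | xs_u].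
    have := ratio_lower_bound (introT andP (conj c_gt0 ((sep_l i).1 xs_l))) gl0 hQl.
    have : 0 <= q * Q by rewrite mulr_ge0.
    by rewrite -/p; lra.
  have := ratio_lower_bound (introT andP (conj c_gt0 ((sep_u i).1 xs_u))) gu0 hQu.
  have : 0 <= p * Q by rewrite mulr_ge0.
  by rewrite -/q; lra.
have dQ := diag_lower_bound Q0 pqQ (hess_le i i) hess_small.
have d_neq0 : hess f x i i + p + q != 0.
  apply/eqP => d0; move: dQ; rewrite d0 mulr0 mul0r.
  by rewrite leNgt exprn_gt0.
rewrite (bigD1 i) //= in E1.
have elim := newton_row_elimination gl0 gu0 E1 E2 E3 d_neq0.
apply: le_trans (error_terms_le_Z i).2.
apply: (diag_error_le c_gt0 Q0 dQ elim).
apply: offdiag_sum_le => j; rewrite normrM.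
by apply: ler_pM => //; exact: (newton_le j).1.
Qed.

Lemma approx_step_closer (dx dll dlu : 'rV[R]_n) (B : R) :
  0 <= B -> B <= norm_active l u xs dxN dllN dluN -> 3 * n%:R * Z ^+ 2 <= B ^+ 2 ->
  (forall i, xs 0 i = l 0 i \/ xs 0 i = u 0 i ->
     dx 0 i = dS f l u s x ll lu i \/ dx 0 i = dC l u xs s x ll lu i) ->
  (forall i, xs 0 i <> l 0 i -> xs 0 i <> u 0 i -> dx 0 i = 0) ->
  (forall i, xs 0 i <> l 0 i -> dll 0 i = dllC l s x ll i) ->
  (forall i, xs 0 i = l 0 i -> dll 0 i = 0) ->
  (forall i, xs 0 i <> u 0 i -> dlu 0 i = dluC u s x lu i) ->
  (forall i, xs 0 i = u 0 i -> dlu 0 i = 0) ->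
  enorm3 (dxN - dx) (dllN - dll) (dluN - dlu) <= enorm3 dxN dllN dluN.
Proof.
move=> B0 hB hZ hdx hdx0 hdll hdll0 hdlu hdlu0.
apply: (approx_step_dist_le _ hdx0 _ hdll0 _ hdlu0 B0 hB hZ).
- by move=> i act; case: (hdx i act) => ->; [exact: dS_error | exact: dC_error].
- by move=> i xs_l; rewrite hdll //; exact: dllC_error.
- by move=> i xs_u; rewrite hdlu //; exact: dluC_error.
Qed.

End NewtonVersusApproximation.

Lemma finite_pos_lower_bound (R : realFieldType) (I : finType) (q : I -> R) :
  (forall i, 0 < q i) -> exists2 c, 0 < c & forall i, c <= q i.
Proof.
move=> q0; have S0 : 0 <= \sum_i (q i)^-1.
  by apply: sumr_ge0 => i _; rewrite invr_ge0 ltW.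
exists (1 + \sum_i (q i)^-1)^-1 => [|i]; first by rewrite invr_gt0; lra.
have : (q i)^-1 <= \sum_j (q j)^-1.
  by rewrite (bigD1 i) //= lerDl; apply: sumr_ge0 => j _; rewrite invr_ge0 ltW.
rewrite -[q i]invrK lef_pV2 ?posrE ?invr_gt0 //; lra.
Qed.

Lemma small_mu_le (R : realFieldType) (a b : R) :
  0 < b -> exists2 m, 0 < m & forall mu, 0 < mu <= m -> a * mu <= b.
Proof.
move=> b0; have a1 : 0 < `|a| + 1 by rewrite ltr_pwDr ?normr_ge0.
exists (b / (`|a| + 1)) => [|mu /andP[mu0 mum]]; first by rewrite divr_gt0.
apply: le_trans (ler_norm _) _; rewrite normrM (gtr0_norm mu0).
have : `|a| * mu <= (`|a| + 1) * mu by rewrite ler_pM2r // lerDl.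
move/le_trans; apply; by rewrite mulrC -ler_pdivlMr.
Qed.

(* Since gamma < 2, mu^2 = o(mu^gamma): G mu^4 <= (C8 mu^gamma)^2 for small mu. *)
Lemma sqr_small_wrt_powR (R : realType) (gamma C8 G : R) :
  0 <= gamma < 2 -> 0 < C8 -> 0 <= G ->
  exists2 m, 0 < m & forall mu, 0 < mu <= m ->
    G * (mu ^+ 2) ^+ 2 <= (C8 * mu `^ gamma) ^+ 2.
Proof.
move=> /andP[g0 g2] C80 G0; have G1 : 0 < G + 1 by lra.
have T0 : 0 < C8 / (G + 1) by rewrite divr_gt0.
have e0 : 0 < 2 - gamma by rewrite subr_gt0.
exists ((C8 / (G + 1)) `^ (2 - gamma)^-1) => [|mu /andP[mu0 mum]]; first exact: powR_gt0.
have small : mu `^ (2 - gamma) <= C8 / (G + 1).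
  have := @ge0_ler_powR R (2 - gamma) (ltW e0) mu _ _ _ mum.
  rewrite -powRrM mulVf ?gt_eqF // powRr1 ?(ltW T0) //; apply; rewrite nnegrE.
    exact: ltW.
  exact: powR_ge0.
have -> : mu ^+ 2 = mu `^ gamma * mu `^ (2 - gamma).
  rewrite -powRD; last by apply/implyP => _; rewrite gt_eqF.
  by rewrite addrC subrK powR_mulrn // ltW.
have r0 := powR_ge0 mu gamma; have q0 := powR_ge0 mu (2 - gamma).
move: small; set r := mu `^ gamma; set q := mu `^ (2 - gamma) => small.
have qG : q * (G + 1) <= C8 by rewrite -ler_pdivlMr.
have qC8 : G * q ^+ 2 <= C8 ^+ 2.
  apply: (@le_trans _ _ ((q * (G + 1)) ^+ 2)); first nra.
  by rewrite lerXn2r // nnegrE ?mulr_ge0 // ?ltW.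
have -> : G * (r * q) ^+ 2 = r ^+ 2 * (G * q ^+ 2) by ring.
by rewrite exprMn mulrC; apply: ler_wpM2r; rewrite ?sqr_ge0.
Qed.

Lemma small_mu_conditions (R : realType) (a1 a2 muhat b1 b2 gamma C8 G : R) :
  0 < muhat -> 0 < b1 -> 0 < b2 -> 0 <= gamma < 2 -> 0 < C8 -> 0 <= G ->
  exists2 mubar, 0 < mubar <= muhat & forall mu, 0 < mu <= mubar ->
    [/\ mu <= muhat, a1 * mu <= b1, a2 * mu <= b2 &
        G * (mu ^+ 2) ^+ 2 <= (C8 * mu `^ gamma) ^+ 2].
Proof.
move=> muhat0 b10 b20 hgamma C80 G0.
have [m1 m10 hm1] := small_mu_le a1 b10.
have [m2 m20 hm2] := small_mu_le a2 b20.
have [m3 m30 hm3] := sqr_small_wrt_powR hgamma C80 G0.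
exists (Num.min muhat (Num.min m1 (Num.min m2 m3))).
  by rewrite !lt_min muhat0 m10 m20 m30 ge_min lexx.
move=> mu /andP[mu0]; rewrite !le_min => /and4P[muh mu1 mu2 mu3].
by split => //; [apply: hm1 | apply: hm2 | apply: hm3]; rewrite mu0.
Qed.

Lemma strict_compl_margin (R : realFieldType) (n : nat) (l u xs lls lus : 'rV[R]_n) :
  (forall i, 0 < xs 0 i - l 0 i + lls 0 i) -> (forall i, 0 < u 0 i - xs 0 i + lus 0 i) ->
  exists2 c, 0 < c &
    forall i, c <= xs 0 i - l 0 i + lls 0 i /\ c <= u 0 i - xs 0 i + lus 0 i.
Proof.
move=> pos_l pos_u.
have [c c0 hc] := @finite_pos_lower_bound R _ (fun i =>
  Num.min (xs 0 i - l 0 i + lls 0 i) (u 0 i - xs 0 i + lus 0 i))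
  (fun i => ltac:(by rewrite lt_min pos_l pos_u)).
by exists c => // i; have := hc i; rewrite le_min => /andP[].
Qed.

Lemma compl_separation (R : realFieldType) (g gs w ws c t : R) :
  gs * ws = 0 -> c <= gs + ws -> 4 * t <= c -> `|g - gs| < 2 * t -> `|w - ws| < 2 * t ->
  (gs = 0 -> c / 2 <= w) /\ (gs <> 0 -> c / 2 <= g).
Proof.
move=> /eqP; rewrite mulf_eq0 => compl cgw ct; rewrite !ltr_norml.
move=> /andP[g1 _] /andP[w1 _]; split => [gs0 | /eqP gs0].
  by move: cgw; rewrite gs0; lra.
by move: compl cgw; rewrite (negbTE gs0) => /eqP ->; lra.
Qed.

Lemma active_set_separation (R : realFieldType) (n : nat) (l u xs lls lus x ll lu : 'rV[R]_n)
    (c t : R) :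
  (forall i, (xs 0 i - l 0 i) * lls 0 i = 0) -> (forall i, (u 0 i - xs 0 i) * lus 0 i = 0) ->
  (forall i, c <= xs 0 i - l 0 i + lls 0 i /\ c <= u 0 i - xs 0 i + lus 0 i) ->
  4 * t <= c ->
  (forall i, `|x 0 i - xs 0 i| < 2 * t /\ `|ll 0 i - lls 0 i| < 2 * t /\
             `|lu 0 i - lus 0 i| < 2 * t) ->
  (forall i, (xs 0 i = l 0 i -> c / 2 <= ll 0 i) /\
             (xs 0 i <> l 0 i -> c / 2 <= x 0 i - l 0 i)) /\
  (forall i, (xs 0 i = u 0 i -> c / 2 <= lu 0 i) /\
             (xs 0 i <> u 0 i -> c / 2 <= u 0 i - x 0 i)).
Proof.
move=> compl_l compl_u margin ct near; split => i; have [nx [nl nu]] := near i.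
- have dg : `|(x 0 i - l 0 i) - (xs 0 i - l 0 i)| < 2 * t by rewrite opprB addrA subrK.
  have [hA hI] := compl_separation (compl_l i) (margin i).1 ct dg nl.
  split => [xs_l | xs_l]; first by apply: hA; rewrite xs_l subrr.
  by apply: hI => h; apply: xs_l; apply/eqP; rewrite -subr_eq0 h.
- have dg : `|(u 0 i - x 0 i) - (u 0 i - xs 0 i)| < 2 * t.
    by rewrite opprB addrC addrA subrK distrC.
  have [hA hI] := compl_separation (compl_u i) (margin i).2 ct dg nu.
  split => [xs_u | xs_u]; first by apply: hA; rewrite xs_u subrr.
  by apply: hI => h; apply: xs_u; apply/eqP; rewrite eq_sym -subr_eq0 h.
Qed.

Lemma hess_bounded_near (R : realType) (n : nat) (f : 'rV[R]_n -> R) (xs : 'rV[R]_n) :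
  C2 f -> exists e Hb, 0 < e /\ forall x : 'rV[R]_n,
    (forall i, `|x 0 i - xs 0 i| < e) -> forall i j, `|hess f x i j| <= Hb.
Proof.
move=> [_ [_ [_ [_ hcont]]]].
have near_entry i j : \forall x \near xs, `|hess f xs i j - hess f x i j| < 1.
  have := cvgr_dist_lt _ _ (hcont i j xs) _ ltr01.
  by move=> h; near=> x; rewrite !mxE; near: x; exact: h.
have near1 : \forall x \near xs, forall i j, `|hess f xs i j - hess f x i j| < 1.
  have nbhsF : Filter (nbhs xs) := nbhs_filter xs.
  apply: (@filter_forall _ _ (fun i x => forall j,
    `|hess f xs i j - hess f x i j| < 1) _ nbhsF) => i.
  exact: (@filter_forall _ _ (fun j x => `|hess f xs i j - hess f x i j| < 1) _ nbhsF
    (near_entry i)).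
move/nbhs_ballP: near1 => [e e0 he]; exists e, (`|hess f xs| + 1); split => // x hx i j.
have bx : ball xs e x.
  rewrite -ball_normE /ball_ /= (_ : `|xs - x| = mx_norm (xs - x)) // mx_normrE.
  by apply: bigmax_lt => // -[a b] _ /=; rewrite (ord1 a) !mxE distrC.
have entry_le : `|hess f xs i j| <= `|hess f xs|.
  rewrite [X in _ <= X]mx_normrE.
  exact: (le_bigmax _ (fun ij => `|hess f xs ij.1 ij.2|) (i, j)).
have tri := ler_normD (hess f xs i j) (hess f x i j - hess f xs i j).
rewrite addrC subrK distrC in tri.
apply: le_trans tri _; apply: lerD => //; exact: ltW (he x bx i j).
Unshelve. all: by end_near.
Qed.

Theorem mainTheorem10 (R : realType) (n : nat) (f : 'rV[R]_n -> R)
  (l u xs lls lus : 'rV[R]_n) (delta muhat C4 : R)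
  (xmu llmu lumu : R -> 'rV[R]_n) (sigma C1 gamma C8 : R) :
  (* problem data *)
  (forall i, l 0 i < u 0 i) ->
  C2 f -> loc_lipschitz_hess f ->
  (* standing hypotheses at (xstar, lambdastar) *)
  grad f xs - lls + lus = 0 ->
  (forall i, l 0 i <= xs 0 i <= u 0 i) ->
  (forall i, 0 <= lls 0 i) -> (forall i, 0 <= lus 0 i) ->
  (forall i, (xs 0 i - l 0 i) * lls 0 i = 0) ->
  (forall i, (u 0 i - xs 0 i) * lus 0 i = 0) ->
  (forall i, 0 < (xs 0 i - l 0 i) + lls 0 i) ->
  (forall i, 0 < (u 0 i - xs 0 i) + lus 0 i) ->
  (forall v : 'rV[R]_n, v != 0 ->
     (forall i, xs 0 i = l 0 i \/ xs 0 i = u 0 i -> v 0 i = 0) ->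
     0 < (v *m hess f xs *m v^T) 0 0) ->
  0 < delta ->
  (exists K : R, forall x ll lu : 'rV[R]_n,
     enorm3 (x - xs) (ll - lls) (lu - lus) < delta ->
     Fprime f l u x ll lu \in unitmx /\
     forall z : 'cV[R]_(n + n + n),
       enormc (invmx (Fprime f l u x ll lu) *m z) <= K * enormc z) ->
  0 < muhat ->
  (exists Lt : R, forall mu mu' : R, 0 < mu <= muhat -> 0 < mu' <= muhat ->
     enorm3 (xmu mu - xmu mu') (llmu mu - llmu mu') (lumu mu - lumu mu')
       <= Lt * `|mu - mu'|) ->
  (forall mu, 0 < mu <= muhat ->
     enorm3 (xmu mu - xs) (llmu mu - lls) (lumu mu - lus) < delta) ->
  (forall mu, 0 < mu <= muhat -> Fmu f l u mu (xmu mu) (llmu mu) (lumu mu) = 0) ->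
  (forall mu, 0 < mu <= muhat ->
     enorm3 (xmu mu - xs) (llmu mu - lls) (lumu mu - lus) <= C4 * mu) ->
  (* parameters of the theorem *)
  0 < sigma < 1 -> 0 < C1 -> 0 <= gamma < 2 -> 0 < C8 ->
  exists rho : R, exists mubar : R, 0 < rho /\ 0 < mubar <= muhat /\
  forall mu : R, 0 < mu <= mubar ->
  forall x ll lu : 'rV[R]_n,
    enorm3 (x - xs) (ll - lls) (lu - lus) < delta ->
    (forall i, l 0 i < x 0 i < u 0 i) ->
    (forall i, 0 < ll 0 i) -> (forall i, 0 < lu 0 i) ->
    enorm3 (x - xmu mu) (ll - llmu mu) (lu - lumu mu) < rho ->
    enormc (Fmu f l u mu x ll lu) <= C1 * mu ->
  forall dxN dllN dluN : 'rV[R]_n,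
    Fprime f l u x ll lu *m stack3 dxN dllN dluN
      = - Fmu f l u (sigma * mu) x ll lu ->
    norm_active l u xs dxN dllN dluN >= C8 * powR mu gamma ->
  forall dx dll dlu : 'rV[R]_n,
    (forall i, xs 0 i = l 0 i \/ xs 0 i = u 0 i ->
       dx 0 i = dS f l u (sigma * mu) x ll lu i \/
       dx 0 i = dC l u xs (sigma * mu) x ll lu i) ->
    (forall i, xs 0 i <> l 0 i -> xs 0 i <> u 0 i -> dx 0 i = 0) ->
    (forall i, xs 0 i <> l 0 i -> dll 0 i = dllC l (sigma * mu) x ll i) ->
    (forall i, xs 0 i = l 0 i -> dll 0 i = 0) ->
    (forall i, xs 0 i <> u 0 i -> dlu 0 i = dluC u (sigma * mu) x lu i) ->
    (forall i, xs 0 i = u 0 i -> dlu 0 i = 0) ->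
    enorm3 ((x + dxN) - (x + dx)) ((ll + dllN) - (ll + dll)) ((lu + dluN) - (lu + dlu))
      <= enorm3 ((x + dxN) - x) ((ll + dllN) - ll) ((lu + dluN) - lu).
Proof.
move=> _ hC2 _ _ _ _ _ compl_l compl_u strict_l strict_u _ _ [K hK] muhat0 _ _ _ hC4
  /andP[s0 s1] C10 hgamma C80.
have [c c0 margin] := strict_compl_margin strict_l strict_u.
have [e [Hb [e0 hess_le]]] := hess_bounded_near xs hC2.
pose t := Num.min c e / 4.
have t0 : 0 < t by rewrite divr_gt0 // lt_min c0 e0.
have t4 : 4 * t = Num.min c e by rewrite /t mulrC divfK // pnatr_eq0.
have tc : 4 * t <= c by rewrite t4 ge_min lexx.
have te : 4 * t <= e by rewrite t4 ge_min lexx orbT.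
pose P := 1 + C1; pose M := `|K| * (3 * n%:R * (C1 + 1)).
pose Z0 := P * M * (1 + 2 * n%:R * Hb) / (c / 2) ^+ 2.
have Z00 : 0 <= 3 * n%:R * Z0 ^+ 2 by rewrite mulr_ge0 ?sqr_ge0 // mulr_ge0 ?ler0n.
have [mubar mubar0 small] := small_mu_conditions C4 (2 * Hb * P) muhat0 t0
  (exprn_gt0 2 (divr_gt0 c0 (ltr0Sn _ 1))) hgamma C80 Z00.
exists t, mubar; split => //; split => // mu mu_in.
have [muh C4t hess_small pow_small] := small mu mu_in; have /andP[mu0 _] := mu_in.
move=> x ll lu hxd hx hll hlu hrho hF dxN dllN dluN hN hact dx dll dlu.
have near := enorm3_coord_chain hrho (le_trans (hC4 _ (introT andP (conj mu0 muh))) C4t).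
have [sep_l sep_u] := active_set_separation compl_l compl_u margin tc near.
have [Funit hKx] := hK x ll lu hxd.
have s_in : 0 <= sigma * mu <= mu.
  apply/andP; split; first by rewrite mulr_ge0 // ltW.
  by rewrite -[X in _ <= X]mul1r ler_pM2r // ltW.
have diff (v w z : 'rV[R]_n) : (v + w) - (v + z) = w - z by rewrite opprD addrACA subrr add0r.
have diff0 (v w : 'rV[R]_n) : (v + w) - v = w by rewrite addrC addKr.
rewrite !diff !diff0.
apply: (approx_step_closer (Q := P * mu) (A := M * mu) (Hb := Hb) hx hll hlu hN _ _ _ _ _
  sep_l sep_u _ hact) => //.
- exact: compl_products_le hF.
- exact: newton_step_small Funit hKx hN hF s_in.
- by move=> i j; apply: hess_le => k; have [nk _] := near k; lra.
- by rewrite divr_gt0.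
- by rewrite mulrA.
- by rewrite mulr_ge0 ?powR_ge0 ?ltW.
- have -> : 3 * n%:R * (P * mu * (M * mu) * (1 + 2 * n%:R * Hb) / (c / 2) ^+ 2) ^+ 2
      = 3 * n%:R * Z0 ^+ 2 * (mu ^+ 2) ^+ 2.
    by rewrite /Z0; field; exact: lt0r_neq0.
  exact: pow_small.
Qed.
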